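(* Let $p'$ be a joint distribution of two binary random variables $(D,E)$ with $p'(E=1)>0$ and $p'(E=0)>0$, and let $M',m'$ be real numbers in the feasible region for $p'$, i.e. $\max_{e\in\{0,1\}} p'(D=1\mid E=e)\le M'\le 1$ and $0\le m'\le \min_{e\in\{0,1\}} p'(D=1\mid E=e)$. Then for every $\delta>0$ there exists a joint distribution $p(D,E,U)$, with $D,E$ binary and $U$ categorical (finitely many values), satisfying positivity (i.e. $p(U=u)>0$ implies $p(E=e\mid U=u)>0$ for both $e\in\{0,1\}$), such that, writing $M=\max_{e,u} p(D=1\mid E=e,U=u)$ and $m=\min_{e,u}p(D=1\mid E=e,U=u)$ (over $e\in\{0,1\}$ and $u$ with $p(U=u)>0$): (i) $|M-M'|<\delta$, $|m-m'|<\delta$, and $|p(D=d,E=e)-p'(D=d,E=e)|<\delta$ for all $d,e\in\{0,1\}$; and (ii) simultaneously, $$\bigl|\,p(D_1=1)-\bigl[p(D=1,E=1)+p(E=0)\,M\bigr]\bigr|<\delta \quad\text{and}\quad \bigl|\,p(D_0=1)-\bigl[p(D=1,E=0)+p(E=1)\,m\bigr]\bigr|<\delta,$$ where $p(D_e=1)=\sum_u p(D=1\mid E=e,U=u)\,p(U=u)$ is the counterfactual probability of the outcome under exposure level $e$.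
   Context: Setting: $E$ (exposure) and $D$ (outcome) are binary, $U$ is an unmeasured categorical confounder, and the causal structure is the graph $U\to E$, $U\to D$, $E\to D$, interpreted as a non-parametric structural equation model with independent errors. $D_e$ denotes the counterfactual outcome when the exposure is set to $E=e$; under this model (counterfactual consistency and $D_e\perp E\mid U$) one has $p(D_e=1)=\sum_u p(D=1\mid E=e,U=u)p(U=u)$. The sensitivity parameters are $M=\max_{e,u}p(D=1\mid E=e,U=u)$ and $m=\min_{e,u}p(D=1\mid E=e,U=u)$. For any such model one has the bounds $p(D=1,E=e)+p(E=1-e)\,m\le p(D_e=1)\le p(D=1,E=e)+p(E=1-e)\,M$; the theorem says the upper bound for $p(D_1=1)$ and the lower bound for $p(D_0=1)$ are simultaneously arbitrarily sharp. *)

From HB Require Import structures.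
From mathcomp Require Import all_boot all_order all_algebra.
From mathcomp Require Import reals.
Set Implicit Arguments. Unset Strict Implicit. Unset Printing Implicit Defensive.
Import Order.TTheory GRing.Theory Num.Theory.
Local Open Scope ring_scope.

Section Defs.
Variable R : realType.

(* p' (d, e) = p'(D = d, E = e) *)
Definition is_dist2 (p' : {ffun bool * bool -> R}) : Prop :=
  (forall x, 0 <= p' x) /\ \sum_x p' x = 1.

Definition margE2 (p' : {ffun bool * bool -> R}) (e : bool) : R :=
  \sum_(d : bool) p' (d, e).

Definition condD2 (p' : {ffun bool * bool -> R}) (e : bool) : R :=
  p' (true, e) / margE2 p' e.

(* p (d, e, u) = p(D = d, E = e, U = u) *)
Definition is_dist3 n (p : {ffun bool * bool * 'I_n -> R}) : Prop :=
  (forall x, 0 <= p x) /\ \sum_x p x = 1.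

Definition margU n (p : {ffun bool * bool * 'I_n -> R}) (u : 'I_n) : R :=
  \sum_(d : bool) \sum_(e : bool) p (d, e, u).

Definition margEU n (p : {ffun bool * bool * 'I_n -> R}) (e : bool) (u : 'I_n) : R :=
  \sum_(d : bool) p (d, e, u).

Definition margDE n (p : {ffun bool * bool * 'I_n -> R}) (d e : bool) : R :=
  \sum_(u : 'I_n) p (d, e, u).

Definition margE n (p : {ffun bool * bool * 'I_n -> R}) (e : bool) : R :=
  \sum_(d : bool) margDE p d e.

Definition condDEU n (p : {ffun bool * bool * 'I_n -> R}) (e : bool) (u : 'I_n) : R :=
  p (true, e, u) / margEU p e u.

(* positivity: p(U = u) > 0 implies p(E = e | U = u) > 0 for both e,
   i.e. p(E = e, U = u) > 0 *)
Definition positivity n (p : {ffun bool * bool * 'I_n -> R}) : Prop :=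
  forall u, 0 < margU p u -> forall e, 0 < margEU p e u.

(* M = max over e and u with p(U=u) > 0 of p(D=1 | E=e, U=u).
   The values lie in [0,1] and the index range is nonempty for a
   distribution, so the neutral element 0 does not affect the value. *)
Definition Mmax n (p : {ffun bool * bool * 'I_n -> R}) : R :=
  \big[Num.max/0]_(eu : bool * 'I_n | 0 < margU p eu.2) condDEU p eu.1 eu.2.

(* m = min over the same range; neutral element 1 (values lie in [0,1]). *)
Definition mmin n (p : {ffun bool * bool * 'I_n -> R}) : R :=
  \big[Num.min/1]_(eu : bool * 'I_n | 0 < margU p eu.2) condDEU p eu.1 eu.2.

Definition pDcf n (p : {ffun bool * bool * 'I_n -> R}) (e : bool) : R :=
  \sum_(u : 'I_n) condDEU p e u * margU p u.

End Defs.

From mathcomp Require Import all_boot all_order all_algebra.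
From mathcomp Require Import reals.
From mathcomp Require Import ring lra.
Import Order.TTheory GRing.Theory Num.Theory.
Local Open Scope ring_scope.

(* The witness has a binary confounder U.  Stratum 0 is almost entirely
   unexposed and stratum 1 almost entirely exposed: the exposed units of
   stratum 0 are a fraction eps of p'(E = 1) and have risk M', the unexposed
   units of stratum 1 are a fraction eps of p'(E = 0) and have risk m', and
   all other units keep the observed risks p'(D = 1 | E = e).  These rare
   cells make the extreme stratum risks exactly M' and m' while moving every
   observed probability by O(eps).  Since p(U = 0) = p'(E = 0) + O(eps),
   p(D_1 = 1) = M' p(U = 0) + p'(D = 1 | E = 1) p(U = 1) is within O(eps) of
   p(D = 1, E = 1) + p(E = 0) M', and symmetrically for D_0 and m'. *)

Lemma sum_pairE {V : nmodType} {I J : finType} (F : I * J -> V) :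
  \sum_x F x = \sum_i \sum_j F (i, j).
Proof. by rewrite pair_bigA; apply: eq_bigr => -[]. Qed.

Section StratifiedModel.
Context {R : realType} {n : nat} (w c : bool -> 'I_n -> R).

Definition stratified_model : {ffun bool * bool * 'I_n -> R} :=
  [ffun x => let: (d, e, u) := x in w e u * (if d then c e u else 1 - c e u)].

Lemma margEU_stratified e u : margEU stratified_model e u = w e u.
Proof. by rewrite /margEU big_bool /= !ffunE; ring. Qed.

Lemma margU_stratified u : margU stratified_model u = w true u + w false u.
Proof. by rewrite /margU big_bool /= !big_bool /= !ffunE; ring. Qed.

Lemma condDEU_stratified e u : w e u != 0 -> condDEU stratified_model e u = c e u.
Proof. by move=> w_neq0; rewrite /condDEU margEU_stratified ffunE /= mulrAC divff ?mul1r. Qed.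

Lemma margDE_stratified d e :
  margDE stratified_model d e = \sum_u w e u * (if d then c e u else 1 - c e u).
Proof. by apply: eq_bigr => u _; rewrite ffunE. Qed.

Lemma margE_stratified e : margE stratified_model e = \sum_u w e u.
Proof.
by rewrite /margE big_bool /= !margDE_stratified -big_split; apply: eq_bigr => u _ /=; ring.
Qed.

Lemma pDcf_stratified e : (forall u, w e u != 0) ->
  pDcf stratified_model e = \sum_u c e u * (w true u + w false u).
Proof.
by move=> w_neq0; apply: eq_bigr => u _; rewrite condDEU_stratified ?margU_stratified.
Qed.

Lemma sum_stratified : \sum_x stratified_model x = \sum_u (w true u + w false u).
Proof.
rewrite sum_pairE exchange_big; apply: eq_bigr => u _.
rewrite (sum_pairE (fun de => stratified_model (de, u))).
by rewrite !big_bool /= !ffunE; ring.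
Qed.

Hypothesis w_gt0 : forall e u, 0 < w e u.

Lemma stratified_dist : (forall e u, 0 <= c e u <= 1) ->
  \sum_u (w true u + w false u) = 1 -> is_dist3 stratified_model.
Proof.
move=> c_bounds w_sum; split; last by rewrite sum_stratified.
move=> [[d e] u]; rewrite ffunE /= mulr_ge0 ?(ltW (w_gt0 e u)) //.
by have := c_bounds e u; case: d; lra.
Qed.

Lemma stratified_positivity : positivity stratified_model.
Proof. by move=> u _ e; rewrite margEU_stratified. Qed.

Lemma Mmax_stratified M e0 u0 : (forall e u, c e u <= M) -> c e0 u0 = M -> 0 <= M ->
  Mmax stratified_model = M.
Proof.
move=> c_le attained M_ge0; have w_neq0 e u : w e u != 0 by exact: lt0r_neq0.
rewrite /Mmax; apply: le_anti; apply/andP; split.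
  by apply: bigmax_le => // -[e u] _ /=; rewrite condDEU_stratified.
rewrite -{1}attained -(condDEU_stratified _ _ (w_neq0 e0 u0)).
by apply: (le_bigmax_cond _ (j := (e0, u0))); rewrite /= margU_stratified addr_gt0.
Qed.

Lemma mmin_stratified m e0 u0 : (forall e u, m <= c e u) -> c e0 u0 = m -> m <= 1 ->
  mmin stratified_model = m.
Proof.
move=> c_ge attained m_le1; have w_neq0 e u : w e u != 0 by exact: lt0r_neq0.
rewrite /mmin; apply: le_anti; apply/andP; split.
  rewrite -{1}attained -(condDEU_stratified _ _ (w_neq0 e0 u0)).
  by apply: (bigmin_le_cond _ (j := (e0, u0))); rewrite /= margU_stratified addr_gt0.
by apply: le_bigmin => // -[e u] _ /=; rewrite condDEU_stratified.
Qed.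

End StratifiedModel.

Lemma normr_scaled_gap_lt {R : realFieldType} {q s t x eps delta : R} :
  x = eps * q * (s - t) -> 0 < eps < delta ->
  0 <= q <= 1 -> 0 <= s <= 1 -> 0 <= t <= 1 -> `|x| < delta.
Proof.
move=> -> /andP[eps_gt0 eps_lt] /andP[q_ge0 q_le1] s_unit t_unit.
have gap_le1 : `|s - t| <= 1 by rewrite ler_norml; lra.
have scaled_gap_le1 : q * `|s - t| <= 1 by rewrite -[1]mulr1 ler_pM.
rewrite !normrM (gtr0_norm eps_gt0) (ger0_norm q_ge0) -mulrA.
have := mulr_ge0 q_ge0 (normr_ge0 (s - t)); nra.
Qed.

Lemma exists_unit_lt {R : realFieldType} {delta : R} :
  0 < delta -> exists2 eps : R, 0 < eps < 1 & eps < delta.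
Proof.
move=> delta_gt0; exists (Num.min delta 1 / 2).
  have : 0 < Num.min delta 1 <= 1 by rewrite lt_min delta_gt0 ltr01 ge_min lexx orbT.
  lra.
have : Num.min delta 1 <= delta by rewrite ge_min lexx.
lra.
Qed.

Section TwoStrata.
Context {R : realType} (q a : bool -> R) (M m eps : R).

(* Exposure level [e] in the stratum dominated by the other level. *)
Definition rare_cell e (u : 'I_2) : bool := e == (u == ord0).

Definition extreme_risk e : R := if e then M else m.

Definition two_strata_weight e u : R := (if rare_cell e u then eps else 1 - eps) * q e.

Definition two_strata_risk e u : R := if rare_cell e u then extreme_risk e else a e.

Definition two_strata_model := stratified_model two_strata_weight two_strata_risk.

Lemma two_strata_weight_gt0 : (forall e, 0 < q e) -> 0 < eps < 1 ->
  forall e u, 0 < two_strata_weight e u.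
Proof. by move=> q_gt0 eps_unit e u; rewrite mulr_gt0 //; case: ifP => _; lra. Qed.

Section RiskBounds.
Hypothesis a_bounds : forall e, m <= a e <= M.

Lemma extreme_risk_bounds e : m <= extreme_risk e <= M.
Proof. by have := a_bounds e; case: e => /=; lra. Qed.

Lemma two_strata_risk_bounds e u : m <= two_strata_risk e u <= M.
Proof. by rewrite /two_strata_risk; case: ifP; rewrite ?extreme_risk_bounds. Qed.

End RiskBounds.

Lemma margDE_two_strata_gap d e :
  margDE two_strata_model d e - (if d then a e else 1 - a e) * q e =
  eps * q e * ((if d then extreme_risk e else 1 - extreme_risk e) - (if d then a e else 1 - a e)).
Proof.
rewrite margDE_stratified !big_ord_recl big_ord0 /two_strata_weight /two_strata_risk /rare_cell /=.
by case: d; case: e => /=; ring.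
Qed.

Lemma pDcf_two_strata_gap e : (forall u, two_strata_weight e u != 0) ->
  pDcf two_strata_model e - (margDE two_strata_model true e +
                             margE two_strata_model (~~ e) * extreme_risk e) =
  eps * q (~~ e) * (a e - extreme_risk e).
Proof.
move=> /pDcf_stratified ->; rewrite margDE_stratified margE_stratified.
rewrite !big_ord_recl !big_ord0 /two_strata_weight /two_strata_risk /rare_cell /=.
by case: e => /=; ring.
Qed.

Lemma two_strata_approximation delta :
  (forall e, 0 < q e) -> q true + q false = 1 -> (forall e, m <= a e <= M) ->
  0 <= m -> M <= 1 -> 0 < eps < 1 -> eps < delta ->
  [/\ is_dist3 two_strata_model, positivity two_strata_model,
      Mmax two_strata_model = M /\ mmin two_strata_model = m,
      forall d e, `|margDE two_strata_model d e - (if d then a e else 1 - a e) * q e| < delta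
    & forall e, `|pDcf two_strata_model e -
                  (margDE two_strata_model true e + margE two_strata_model (~~ e) * extreme_risk e)| < delta].
Proof.
move=> q_gt0 q_sum a_bounds m_ge0 M_le1 eps_unit eps_lt.
have w_gt0 := two_strata_weight_gt0 q_gt0 eps_unit.
have c_bounds := two_strata_risk_bounds a_bounds.
have ext_bounds := extreme_risk_bounds a_bounds.
have m_le_M : m <= M by have := a_bounds true; lra.
have eps_bounds : 0 < eps < delta by have := eps_unit; lra.
have q_unit e : 0 <= q e <= 1 by have := q_gt0 true; have := q_gt0 false; case: e; lra.
have unit_bounds (d : bool) x : m <= x <= M -> 0 <= (if d then x else 1 - x) <= 1.
  by case: d; lra.
split.
- apply: stratified_dist => // [e u|]; first exact/(unit_bounds true)/c_bounds.
  by rewrite !big_ord_recl big_ord0 /two_strata_weight /=; lra.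
- exact: stratified_positivity.
- split.
    apply: (Mmax_stratified _ _ w_gt0 M true ord0) => //; last lra.
    by move=> e u; have /andP[] := c_bounds e u.
  apply: (mmin_stratified _ _ w_gt0 m false (lift ord0 ord0)) => //; last lra.
  by move=> e u; have /andP[] := c_bounds e u.
- move=> d e; apply: (normr_scaled_gap_lt (margDE_two_strata_gap d e)) => //.
  + exact/unit_bounds/ext_bounds.
  + exact/unit_bounds/a_bounds.
- move=> e; have w_neq0 u : two_strata_weight e u != 0 by exact: lt0r_neq0.
  apply: (normr_scaled_gap_lt (pDcf_two_strata_gap e w_neq0)) => //.
  + exact/(unit_bounds true)/a_bounds.
  + exact/(unit_bounds true)/ext_bounds.
Qed.

End TwoStrata.

Arguments two_strata_approximation {R q a M m eps delta}.

Lemma margE2_total {R : realType} {p' : {ffun bool * bool -> R}} :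
  is_dist2 p' -> margE2 p' true + margE2 p' false = 1.
Proof.
by move=> [_ <-]; rewrite sum_pairE /margE2 !big_bool /=; ring.
Qed.

Lemma dist2_chain_rule {R : realType} {p' : {ffun bool * bool -> R}} d {e} :
  margE2 p' e != 0 -> p' (d, e) = (if d then condD2 p' e else 1 - condD2 p' e) * margE2 p' e.
Proof.
move=> margE_neq0; case: d; rewrite ?mulrBl ?mul1r /condD2 divfK //.
by rewrite /margE2 big_bool /=; ring.
Qed.

Theorem theorem2 (R : realType) (p' : {ffun bool * bool -> R}) (M' m' : R) :
  is_dist2 p' ->
  0 < margE2 p' true -> 0 < margE2 p' false ->
  (forall e : bool, condD2 p' e <= M') -> M' <= 1 ->
  0 <= m' -> (forall e : bool, m' <= condD2 p' e) ->
  forall delta : R, 0 < delta ->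
  exists (n : nat) (p : {ffun bool * bool * 'I_n -> R}),
    is_dist3 p /\ positivity p /\
    (`|Mmax p - M'| < delta /\ `|mmin p - m'| < delta /\
     (forall d e : bool, `|margDE p d e - p' (d, e)| < delta)) /\
    (`|pDcf p true - (margDE p true true + margE p false * Mmax p)| < delta /\
     `|pDcf p false - (margDE p true false + margE p true * mmin p)| < delta).
Proof.
move=> p'_dist q1_gt0 q0_gt0 a_le_M M_le1 m_ge0 m_le_a delta delta_gt0.
have q_gt0 : forall e, 0 < margE2 p' e by case.
have a_bounds e : m' <= condD2 p' e <= M' by rewrite m_le_a a_le_M.
have [eps eps_unit eps_lt_delta] := exists_unit_lt delta_gt0.
exists 2%N, (two_strata_model (margE2 p') (condD2 p') M' m' eps).
have [dist pos [-> ->] DE_near cf_near] := two_strata_approximation q_gt0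
  (margE2_total p'_dist) a_bounds m_ge0 M_le1 eps_unit eps_lt_delta.
rewrite !subrr normr0; split=> //; split=> //.
split; last by split; [exact: (cf_near true) | exact: (cf_near false)].
by split=> //; split=> // d e; rewrite (dist2_chain_rule d (lt0r_neq0 (q_gt0 e))).
Qed.
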